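(* Let $\mathcal{C}$ be a finitary $2$-category over a field $\Bbbk$, and let $(\mathcal{S}(\mathcal{C}),* )$ be its multisemigroup: $\mathcal{S}(\mathcal{C})$ is the set of isomorphism classes of indecomposable $1$-morphisms and $[F]*[G]=\{[H]: H\text{ is isomorphic to a direct summand of }F\circ G\}$. Then $(\mathcal{S}(\mathcal{C}),* )$ admits a deformation.
   Context: A $2$-category is $\Bbbk$-admissible if each category $\mathcal{C}(\mathtt{i},\mathtt{j})$ is $\Bbbk$-linear, idempotent split and Krull–Schmidt and composition is $\Bbbk$-bilinear; it is finitary if moreover it has finitely many objects, finitely many indecomposable $1$-morphisms up to isomorphism, finite-dimensional spaces of $2$-morphisms, and indecomposable identity $1$-morphisms. A finitary multisemigroup with multiplicities on a non-empty set $S$ is a map $\mu:S\times S\to\{\text{functions }S\to\mathrm{Card}_{\aleph_0}\}$ ($\mathrm{Card}_{\aleph_0}$ = cardinals $\le\aleph_0$ with truncated cardinal arithmetic), $(s,t)\mapsto\mu_{s,t}$, with all values finite, $\{t:\mu_{r,s}(t)\neq0\}$ finite for all $r,s$, and $\sum_{i\in S}\mu_{s,t}(i)\mu_{r,i}=\sum_{j\in S}\mu_{r,s}(j)\mu_{j,t}$ for all $r,s,t\in S$ (where $\lambda\nu$ is the pointwise sum of $\lambda$ copies of $\nu$). A deformation of a finite multisemigroup $(S,* )$ is a finitary multisemigroup with multiplicities $(S,\mu)$ such that for all $x,y,z\in S$: $z\in x*y$ if and only if $\mu_{x,y}(z)\neq0$. *)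

From HB Require Import structures.
From mathcomp Require Import all_boot all_order all_algebra.
Set Implicit Arguments. Unset Strict Implicit. Unset Printing Implicit Defensive.
Import GRing.Theory.
Local Open Scope ring_scope.

(* Data of a (strict) 2-category whose 2-morphism spaces are finite-dimensional
   k-vector spaces (vectType k = finite-dimensional vector space). *)
Record cat2 (k : fieldType) := Cat2 {
  Ob : finType;
  Mor : Ob -> Ob -> Type;
  id1 : forall i, Mor i i;
  comp1 : forall i j l, Mor j l -> Mor i j -> Mor i l;
  Hom : forall i j, Mor i j -> Mor i j -> vectType k;
  id2 : forall (i j : Ob) (F : Mor i j), Hom F F;
  vcomp : forall (i j : Ob) (F G H : Mor i j), Hom G H -> Hom F G -> Hom F H;
  hcomp : forall (i j l : Ob) (F F' : Mor j l) (G G' : Mor i j),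
            Hom F F' -> Hom G G' -> Hom (comp1 F G) (comp1 F' G')
}.
Arguments Ob {k}.
Arguments Mor {k c} i j.
Arguments id1 {k c} i.
Arguments comp1 {k c i j l}.
Arguments Hom {k c i j}.
Arguments id2 {k c i j}.
Arguments vcomp {k c i j F G H}.
Arguments hcomp {k c i j l F F' G G'}.

Definition castHom k (C : cat2 k) (i j : Ob C) (F F' G G' : Mor i j)
  (e1 : F = F') (e2 : G = G') (a : Hom F G) : Hom F' G' :=
  match e1 in _ = X, e2 in _ = Y return Hom X Y with erefl, erefl => a end.

Record is_strict_2cat k (C : cat2 k) : Prop := {
  c1A : forall (i j l m : Ob C) (F : Mor l m) (G : Mor j l) (H : Mor i j),
          comp1 (comp1 F G) H = comp1 F (comp1 G H);
  c1l : forall (i j : Ob C) (F : Mor i j), comp1 (id1 j) F = F;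
  c1r : forall (i j : Ob C) (F : Mor i j), comp1 F (id1 i) = F;
  vA : forall (i j : Ob C) (F G H K : Mor i j) (a : Hom H K) (b : Hom G H) (c : Hom F G),
          vcomp (vcomp a b) c = vcomp a (vcomp b c);
  vl : forall (i j : Ob C) (F G : Mor i j) (a : Hom F G), vcomp (id2 G) a = a;
  vr : forall (i j : Ob C) (F G : Mor i j) (a : Hom F G), vcomp a (id2 F) = a;
  vlin_l : forall (i j : Ob C) (F G H : Mor i j) (x : k) (a a' : Hom G H) (b : Hom F G),
          vcomp (x *: a + a') b = x *: vcomp a b + vcomp a' b;
  vlin_r : forall (i j : Ob C) (F G H : Mor i j) (x : k) (a : Hom G H) (b b' : Hom F G),
          vcomp a (x *: b + b') = x *: vcomp a b + vcomp a b';
  hlin_l : forall (i j l : Ob C) (F F' : Mor j l) (G G' : Mor i j) (x : k)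
          (a a' : Hom F F') (b : Hom G G'),
          hcomp (x *: a + a') b = x *: hcomp a b + hcomp a' b;
  hlin_r : forall (i j l : Ob C) (F F' : Mor j l) (G G' : Mor i j) (x : k)
          (a : Hom F F') (b b' : Hom G G'),
          hcomp a (x *: b + b') = x *: hcomp a b + hcomp a b';
  hid : forall (i j l : Ob C) (F : Mor j l) (G : Mor i j), hcomp (id2 F) (id2 G) = id2 (comp1 F G);
  interchange : forall (i j l : Ob C) (F F' F'' : Mor j l) (G G' G'' : Mor i j)
          (a : Hom F' F'') (a' : Hom F F') (b : Hom G' G'') (b' : Hom G G'),
          hcomp (vcomp a a') (vcomp b b') = vcomp (hcomp a b) (hcomp a' b');
  hA : forall (i j l m : Ob C) (F F' : Mor l m) (G G' : Mor j l) (H H' : Mor i j)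
          (a : Hom F F') (b : Hom G G') (c : Hom H H'),
          castHom (c1A F G H) (c1A F' G' H') (hcomp (hcomp a b) c)
          = hcomp a (hcomp b c);
  hl : forall (i j : Ob C) (F F' : Mor i j) (a : Hom F F'),
          castHom (c1l F) (c1l F') (hcomp (id2 (id1 j)) a) = a;
  hr : forall (i j : Ob C) (F F' : Mor i j) (a : Hom F F'),
          castHom (c1r F) (c1r F') (hcomp a (id2 (id1 i))) = a
}.

Section HomCat.
Variables (k : fieldType) (C : cat2 k) (i j : Ob C).

Definition isZero (X : Mor i j) : Prop := id2 X = 0.

Definition biprod (X Y Z : Mor i j) : Prop :=
  exists (p1 : Hom X Y) (p2 : Hom X Z) (e1 : Hom Y X) (e2 : Hom Z X),
    [/\ vcomp p1 e1 = id2 Y, vcomp p2 e2 = id2 Z, vcomp p1 e2 = 0,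
        vcomp p2 e1 = 0 & vcomp e1 p1 + vcomp e2 p2 = id2 X].

Definition additive : Prop :=
  (exists Z : Mor i j, isZero Z) /\ (forall Y Z : Mor i j, exists X, biprod X Y Z).

Definition idem_split : Prop :=
  forall (X : Mor i j) (e : Hom X X), vcomp e e = e ->
    exists (Y : Mor i j) (r : Hom X Y) (s : Hom Y X), vcomp s r = e /\ vcomp r s = id2 Y.

Definition invertible (X Y : Mor i j) (f : Hom X Y) : Prop :=
  exists g : Hom Y X, vcomp g f = id2 X /\ vcomp f g = id2 Y.

Definition iso (X Y : Mor i j) : Prop := exists f : Hom X Y, invertible f.

Definition local_end (X : Mor i j) : Prop :=
  id2 X <> 0 /\ forall f : Hom X X, invertible f \/ invertible (id2 X - f).

Definition krull_schmidt : Prop :=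
  additive /\
  forall X : Mor i j, exists (n : nat) (Y : 'I_n -> Mor i j)
      (e : forall t, Hom (Y t) X) (p : forall t, Hom X (Y t)),
    [/\ forall t, local_end (Y t),
        forall t, vcomp (p t) (e t) = id2 (Y t),
        forall t s, t != s -> vcomp (p t) (e s) = 0
      & \sum_(t < n) vcomp (e t) (p t) = id2 X].

Definition indecomposable (X : Mor i j) : Prop :=
  ~ isZero X /\ forall Y Z, biprod X Y Z -> isZero Y \/ isZero Z.

Definition summand (H X : Mor i j) : Prop := exists Z, biprod X H Z.

End HomCat.

Definition finitary k (C : cat2 k) : Prop :=
  [/\ is_strict_2cat C,
      forall i j : Ob C, [/\ additive i j, idem_split i j & krull_schmidt i j],
      forall i j : Ob C, exists (n : nat) (R : 'I_n -> Mor i j),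
        forall F : Mor i j, indecomposable F -> exists t, iso (R t) F
    & forall i : Ob C, indecomposable (id1 i)].

Record mor1 k (C : cat2 k) := Mor1 { msrc : Ob C; mtgt : Ob C; mor : Mor msrc mtgt }.
Arguments Mor1 {k C msrc mtgt}.

Definition indecP k (C : cat2 k) (x : mor1 C) : Prop := indecomposable (mor x).

Definition isoP k (C : cat2 k) (x y : mor1 C) : Prop :=
  exists (i j : Ob C) (F G : Mor i j), [/\ x = Mor1 F, y = Mor1 G & iso F G].

Definition iso_classes k (C : cat2 k) (S : finType) (cls : mor1 C -> S) : Prop :=
  (forall s, exists x, indecP x /\ cls x = s) /\
  (forall x y, indecP x -> indecP y -> (cls x = cls y <-> isoP x y)).

Definition in_prod k (C : cat2 k) (x y z : mor1 C) : Prop :=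
  exists (i j l : Ob C) (F : Mor j l) (G : Mor i j) (H : Mor i l),
    [/\ x = Mor1 F, y = Mor1 G, z = Mor1 H & summand H (comp1 F G)].

(* the multisemigroup operation: u \in s * t *)
Definition msg_star k (C : cat2 k) (S : finType) (cls : mor1 C -> S) (s t u : S) : Prop :=
  exists x y z, [/\ indecP x, indecP y, indecP z &
    [/\ cls x = s, cls y = t, cls z = u & in_prod x y z]].

(* finitary multisemigroup with multiplicities on a finite set S;
   mu r s t = mu_{r,s}(t) (finite values, so nat) *)
Definition fin_msg_mult (S : finType) (mu : S -> S -> S -> nat) : Prop :=
  forall r s t u : S,
    (\sum_(i : S) mu s t i * mu r i u = \sum_(j : S) mu r s j * mu j t u)%N.

Definition deformation (S : finType) (star : S -> S -> S -> Prop)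
  (mu : S -> S -> S -> nat) : Prop :=
  fin_msg_mult mu /\ forall x y z, star x y z <-> mu x y z <> 0%N.

(* For an indecomposable [H] the endomorphism algebra is local, so the maps
   [f : H -> X] for which no [g f] is invertible form a subspace of [Hom H X].
   Its codimension [topdim H X] is additive over direct sums in [X], equals
   [topdim H H > 0] on 1-morphisms isomorphic to [H] and vanishes on the other
   indecomposables; by Krull-Schmidt, [topdim H X] is the multiplicity of [H] in [X]
   times [topdim H H]. Let [mu_{s,t}(u)] be the multiplicity of [u] in [s o t].
   Decomposing [s o t] (resp. [r o s]) and using that [r o -] (resp. [- o t])
   preserves direct sums, both sides of the associativity identity compute the
   multiplicity of [u] in [r o s o t]; and [mu_{s,t}(u) <> 0] exactly when [u] is a
   direct summand of [s o t]. *)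

From HB Require Import structures.
From mathcomp Require Import all_boot all_order all_algebra zify.
From Stdlib Require Import Classical ClassicalEpsilon Eqdep_dec.

Set Implicit Arguments. Unset Strict Implicit. Unset Printing Implicit Defensive.
Import GRing.Theory.
Local Open Scope ring_scope.

Section Codimension.
Variable k : fieldType.

Definition codimv (V : vectType k) (U : {vspace V}) : nat := (\dim {:V} - \dim U)%N.

Lemma vspace_of_pred (V : vectType k) (P : V -> Prop) :
  P 0 -> (forall x u v, P u -> P v -> P (x *: u + v)) ->
  exists U : {vspace V}, forall v, v \in U <-> P v.
Proof.
move=> P0 PL.
suff grow : forall m (U : {vspace V}), (codimv U <= m)%N -> (forall v, v \in U -> P v) ->
    exists U' : {vspace V}, forall v, v \in U' <-> P v.
  by apply: (grow _ 0%VS (leqnn _)) => v; rewrite memv0 => /eqP ->.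
elim=> [|m IH] U hm hU.
  exists U => v; split; first exact: hU.
  have /eqP -> : U == fullv by rewrite eqEdim subvf /= -subn_eq0 -leqn0.
  by rewrite memvf.
have [hall|] := classic (forall v, P v -> v \in U).
  by exists U => v; split; [apply: hU | apply: hall].
move=> /not_all_ex_not [v hv]; have [Pv nUv] := imply_to_and _ _ hv.
apply: (IH (U + <[v]>)%VS).
  have lt : (\dim U < \dim (U + <[v]>))%N.
    rewrite (ltn_leqif (dimv_leqif_eq (addvSl U <[v]>))).
    by apply: contra_notN nUv => /eqP ->; apply: subvP (addvSr U _) _ (memv_line v).
  have : (\dim (U + <[v]>) <= \dim {:V})%N by apply/dimvS/subvf.
  by move: hm lt; rewrite /codimv; lia.
move=> w /memv_addP [u Uu [w' /vlineP [c ->] ->]].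
by rewrite addrC; apply: PL => //; apply: hU.
Qed.

Lemma memv_img_linfun (V W : vectType k) (f : {linear V -> W}) (U : {vspace V}) w :
  w \in (linfun f @: U)%VS <-> exists2 u, u \in U & w = f u.
Proof.
split; first by case/memv_imgP=> u Uu ->; exists u; rewrite ?lfunE.
by case=> u Uu ->; apply/memv_imgP; exists u; rewrite ?lfunE.
Qed.

Lemma dimv_img_linfun (V W : vectType k) (f : {linear V -> W}) (U : {vspace V}) :
  injective f -> \dim (linfun f @: U) = \dim U.
Proof.
move=> finj; apply: limg_dim_eq.
have /eqP -> : lker (linfun f) == 0%VS.
  by apply/lker0P => x y; rewrite !lfunE; apply: finj.
by rewrite capv0.
Qed.

Section DirectSum.
Variables (W : vectType k) (n : nat) (V : 'I_n -> vectType k).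
Variables (phi : forall a, {linear V a -> W}) (psi : forall a, {linear W -> V a}).
Hypothesis psiK : forall a (v : V a), psi a (phi a v) = v.
Hypothesis psi_phi0 : forall a b (v : V b), a != b -> psi a (phi b v) = 0.
Hypothesis sum_phi_psi : forall w, \sum_a phi a (psi a w) = w.

Lemma phi_inj a : injective (phi a).
Proof. by move=> x y e; rewrite -(psiK x) e psiK. Qed.

Lemma directv_sum_phi (T : forall a, {vspace W}) :
  (forall a w, w \in T a -> exists v, w = phi a v) -> directv (\sum_a T a).
Proof.
move=> hT; apply/directv_sum_independent => us hus hs0 a _.
have := congr1 (psi a) hs0; rewrite linear_sum linear0 (bigD1 a) //= big1 ?addr0.
  by have [v ->] := hT a _ (hus a isT); rewrite psiK => ->; rewrite linear0.
move=> b ba; have [v ->] := hT b _ (hus b isT).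
by apply: psi_phi0; rewrite eq_sym.
Qed.

Lemma codimv_decomp (U : forall a, {vspace V a}) (U0 : {vspace W}) :
  (forall w, w \in U0 <-> forall a, psi a w \in U a) ->
  codimv U0 = (\sum_a codimv (U a))%N.
Proof.
move=> hU.
pose img a (X : {vspace V a}) := (linfun (phi a) @: X)%VS.
have dim_img a X : \dim (img a X) = \dim X by apply/dimv_img_linfun/phi_inj.
have in_img a X w : w \in img a X -> exists v, w = phi a v.
  by case/memv_img_linfun=> v _ ->; exists v.
have eF : fullv = (\sum_a img a fullv)%VS.
  apply/eqP; rewrite eqEsubv subvf andbT; apply/subvP => w _.
  rewrite -(sum_phi_psi w); apply: memv_sumr => a _.
  by apply/memv_img_linfun; exists (psi a w); rewrite ?memvf.
have eU : U0 = (\sum_a img a (U a))%VS.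
  apply/eqP; rewrite eqEsubv; apply/andP; split; apply/subvP => w.
    move=> /hU Uw; rewrite -(sum_phi_psi w); apply: memv_sumr => a _.
    by apply/memv_img_linfun; exists (psi a w); first exact: Uw.
  case/memv_sumP=> us hus ->; apply: rpred_sum => a _.
  have /memv_img_linfun [u Uu ->] := hus a isT.
  apply/hU => b; have [-> | ba] := eqVneq b a; first by rewrite psiK.
  by rewrite psi_phi0 // mem0v.
rewrite /codimv eF eU.
rewrite (directvP (directv_sum_phi (fun a => @in_img a _))).
rewrite (directvP (directv_sum_phi (fun a => @in_img a _))) /= -sumnB.
  by apply: eq_bigr => a _; rewrite !dim_img.
by move=> a _; rewrite !dim_img; apply/dimvS/subvf.
Qed.

End DirectSum.
End Codimension.

Section TwoCategory.
Variables (k : fieldType) (C : cat2 k) (HC : is_strict_2cat C).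

Section HomSpace.
Variables (i j : Ob C).

Definition precomp (F G H : Mor i j) (b : Hom F G) : {linear Hom G H -> Hom F H} :=
  HB.pack (fun a => vcomp a b)
    (GRing.isLinear.Build _ _ _ _ (fun a => vcomp a b) (fun x a a' => vlin_l HC x a a' b)).

Definition postcomp (F G H : Mor i j) (a : Hom G H) : {linear Hom F G -> Hom F H} :=
  HB.pack (fun b => vcomp a b)
    (GRing.isLinear.Build _ _ _ _ (fun b => vcomp a b) (fun x b b' => vlin_r HC x a b b')).

Lemma precompE (F G H : Mor i j) (b : Hom F G) (a : Hom G H) : precomp H b a = vcomp a b.
Proof. by []. Qed.

Lemma postcompE (F G H : Mor i j) (a : Hom G H) (b : Hom F G) : postcomp F a b = vcomp a b.
Proof. by []. Qed.

Section VcompLinear.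
Variables (F G H : Mor i j).

Lemma vcomp0l (b : Hom F G) : vcomp (0 : Hom G H) b = 0.
Proof. by rewrite -precompE linear0. Qed.
Lemma vcomp0r (a : Hom G H) : vcomp a (0 : Hom F G) = 0.
Proof. by rewrite -postcompE linear0. Qed.
Lemma vcompDr (a : Hom G H) (b b' : Hom F G) : vcomp a (b + b') = vcomp a b + vcomp a b'.
Proof. by rewrite -!postcompE linearD. Qed.
Lemma vcompBl (a a' : Hom G H) (b : Hom F G) : vcomp (a - a') b = vcomp a b - vcomp a' b.
Proof. by rewrite -!precompE linearB. Qed.
Lemma vcompBr (a : Hom G H) (b b' : Hom F G) : vcomp a (b - b') = vcomp a b - vcomp a b'.
Proof. by rewrite -!postcompE linearB. Qed.
Lemma vcompZl x (a : Hom G H) (b : Hom F G) : vcomp (x *: a) b = x *: vcomp a b.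
Proof. by rewrite -!precompE linearZ. Qed.
Lemma vcompZr x (a : Hom G H) (b : Hom F G) : vcomp a (x *: b) = x *: vcomp a b.
Proof. by rewrite -!postcompE linearZ. Qed.
Lemma vcomp_suml (I : finType) (a : I -> Hom G H) (b : Hom F G) :
  vcomp (\sum_t a t) b = \sum_t vcomp (a t) b.
Proof. by rewrite -!precompE linear_sum. Qed.
Lemma vcomp_sumr (I : finType) (a : Hom G H) (b : I -> Hom F G) :
  vcomp a (\sum_t b t) = \sum_t vcomp a (b t).
Proof. by rewrite -!postcompE linear_sum. Qed.

End VcompLinear.

Lemma vcomp1l (F G : Mor i j) (a : Hom F G) : vcomp (id2 G) a = a.
Proof. exact: (vl HC). Qed.

Lemma vcomp1r (F G : Mor i j) (a : Hom F G) : vcomp a (id2 F) = a.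
Proof. exact: (vr HC). Qed.

Lemma vcompA (F G H K : Mor i j) (a : Hom H K) (b : Hom G H) (c : Hom F G) :
  vcomp a (vcomp b c) = vcomp (vcomp a b) c.
Proof. by rewrite (vA). Qed.

Lemma iso_refl (X : Mor i j) : iso X X.
Proof. by exists (id2 X), (id2 X); rewrite vcomp1l. Qed.

Lemma iso_sym (X Y : Mor i j) : iso X Y -> iso Y X.
Proof. by move=> [f [g [h1 h2]]]; exists g, f. Qed.

Lemma invertible_id2 (X : Mor i j) : invertible (id2 X).
Proof. by exists (id2 X); rewrite vcomp1l. Qed.

Lemma not_invertible0 (X Y : Mor i j) : id2 X <> 0 -> ~ invertible (0 : Hom X Y).
Proof. by move=> nz [g [h _]]; apply: nz; rewrite -h vcomp0r. Qed.

Lemma invertible_scale (X Y : Mor i j) (c : k) (f : Hom X Y) :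
  id2 X <> 0 -> invertible (c *: f) -> invertible f.
Proof.
move=> nz; have [->|cn0] := eqVneq c 0; first by rewrite scale0r => /not_invertible0.
case=> g [h1 h2]; exists (c *: g); split; first by rewrite vcompZl -vcompZr.
by rewrite vcompZr -vcompZl.
Qed.

Lemma local_end_neq0 (Y : Mor i j) : local_end Y -> id2 Y <> 0.
Proof. by case. Qed.

Lemma local_endD (H : Mor i j) (x y : Hom H H) : local_end H ->
  invertible (x + y) -> invertible x \/ invertible y.
Proof.
move=> [_ hl] [v [h1 h2]].
have hs : vcomp v x + vcomp v y = id2 H by rewrite -vcompDr.
have inv_of_left (z : Hom H H) : invertible (vcomp v z) -> invertible z.
  move=> [w [w1 w2]]; exists (vcomp w v); split; first by rewrite -vcompA.
  have e : vcomp z w = x + y by rewrite -[LHS]vcomp1l -h2 -vcompA (vcompA v) w2 vcomp1r.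
  by rewrite vcompA e h2.
have [/inv_of_left|] := hl (vcomp v x); first by left.
by rewrite -hs addrC addKr => /inv_of_left; right.
Qed.

Lemma local_end_sum (H : Mor i j) (I : finType) (x : I -> Hom H H) : local_end H ->
  (forall t, ~ invertible (x t)) -> ~ invertible (\sum_t x t).
Proof.
move=> hl hx; apply: (big_ind (fun z => ~ invertible z)) => //.
- exact: not_invertible0 (local_end_neq0 hl).
- by move=> a b na nb /(local_endD hl) [].
Qed.

Lemma local_end_idem (Y : Mor i j) (e : Hom Y Y) : local_end Y ->
  vcomp e e = e -> e = 0 \/ e = id2 Y.
Proof.
move=> [_ hl] he; case: (hl e) => [[g [h1 _]]|[g [h1 _]]].
  by right; rewrite -h1 -{2}he vcompA h1 vcomp1l.
left; have h0 : vcomp (id2 Y - e) e = 0 by rewrite vcompBl vcomp1l he subrr.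
by rewrite -[e]vcomp1l -h1 -vcompA h0 vcomp0r.
Qed.

End HomSpace.

Section Radical.
Variables (i j : Ob C).

Definition radical (H X : Mor i j) (f : Hom H X) : Prop :=
  forall g : Hom X H, ~ invertible (vcomp g f).

(* [radical] is a subspace when [End H] is local; otherwise [radv H X] is an
   arbitrary subspace. *)
Definition radv (H X : Mor i j) : {vspace Hom H X} :=
  epsilon (inhabits 0%VS) (fun U => forall f, f \in U <-> radical f).

(* For indecomposable [H], the multiplicity of [H] in [X] times [topdim H H]. *)
Definition topdim (H X : Mor i j) : nat := codimv (radv H X).

Lemma mem_radv (H X : Mor i j) : local_end H ->
  forall f : Hom H X, f \in radv H X <-> radical f.
Proof.
move=> hl; apply: (epsilon_spec (inhabits 0%VS) (fun U => forall f, f \in U <-> radical f)).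
apply: vspace_of_pred.
  by move=> g; rewrite vcomp0r; apply: not_invertible0 (local_end_neq0 hl).
move=> x u v hu hv g; rewrite vcompDr vcompZr => /(local_endD hl) [].
  by move/(invertible_scale (local_end_neq0 hl)); apply: hu.
exact: hv.
Qed.

Definition decomp (X : Mor i j) n (Z : 'I_n -> Mor i j) (E : forall a, Hom (Z a) X)
  (P : forall a, Hom X (Z a)) : Prop :=
  [/\ forall a, vcomp (P a) (E a) = id2 (Z a),
      forall a b, a != b -> vcomp (P a) (E b) = 0
    & \sum_a vcomp (E a) (P a) = id2 X].

Lemma topdim_decomp (H X : Mor i j) n (Z : 'I_n -> Mor i j)
    (E : forall a, Hom (Z a) X) (P : forall a, Hom X (Z a)) :
  local_end H -> decomp E P -> topdim H X = (\sum_a topdim H (Z a))%N.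
Proof.
move=> hl [hPE hPE0 hEP].
apply: (@codimv_decomp _ _ _ _ (fun a => postcomp H (E a)) (fun a => postcomp H (P a))).
- by move=> a v; rewrite !postcompE vcompA hPE vcomp1l.
- by move=> a b v ab; rewrite !postcompE vcompA hPE0 // vcomp0l.
- move=> w; rewrite (eq_bigr (fun a => vcomp (vcomp (E a) (P a)) w)).
    by rewrite -vcomp_suml hEP vcomp1l.
  by move=> a _; rewrite !postcompE vcompA.
move=> f; rewrite mem_radv //; split.
  by move=> hf a; rewrite mem_radv // postcompE => g; rewrite vcompA; apply: hf.
move=> hf g.
have -> : vcomp g f = \sum_a vcomp (vcomp g (E a)) (vcomp (P a) f).
  rewrite -[f in LHS]vcomp1l -hEP vcomp_suml vcomp_sumr.
  by apply: eq_bigr => a _; rewrite !vcompA.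
apply: (local_end_sum hl) => a; move: (hf a); rewrite postcompE mem_radv //; apply.
Qed.

Lemma decomp_iso (X Y : Mor i j) (f : Hom X Y) (g : Hom Y X) :
  vcomp g f = id2 X -> vcomp f g = id2 Y -> decomp (fun _ : 'I_1 => g) (fun _ => f).
Proof.
move=> h1 h2; split => //; first by move=> a b; rewrite !ord1 eqxx.
by rewrite big_ord1.
Qed.

Lemma topdim_iso (H X Y : Mor i j) : local_end H -> iso X Y -> topdim H X = topdim H Y.
Proof. by move=> hl [f [g [h1 h2]]]; rewrite (topdim_decomp hl (decomp_iso h1 h2)) big_ord1. Qed.

Lemma topdim_gt0 (H X : Mor i j) : local_end H ->
  (0 < topdim H X)%N <-> exists (f : Hom H X) (g : Hom X H), invertible (vcomp g f).
Proof.
move=> hl; rewrite /topdim /codimv subn_gt0 (ltn_leqif (dimv_leqif_eq (subvf _))).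
split=> [|[f [g hinv]]].
  move=> hneq; apply: NNPP => hno; case/negP: hneq; rewrite eqEsubv subvf /=.
  by apply/subvP => f _; apply/mem_radv => // g hinv; apply: hno; exists f, g.
apply/negP => /eqP e.
have : f \in radv H X by rewrite e memvf.
by move/(mem_radv hl) => /(_ g).
Qed.

Lemma topdim_id_gt0 (H : Mor i j) : local_end H -> (0 < topdim H H)%N.
Proof.
by move=> hl; apply/topdim_gt0 => //; exists (id2 H), (id2 H); rewrite vcomp1l; apply: invertible_id2.
Qed.

Lemma topdim_noniso (H Y : Mor i j) : local_end H -> local_end Y -> ~ iso H Y ->
  topdim H Y = 0%N.
Proof.
move=> hl hY hni; apply/eqP; rewrite eqn0Ngt; apply/negP => /(topdim_gt0 _ hl).
move=> [f [g [u [u1 u2]]]].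
have he : vcomp (vcomp f (vcomp u g)) (vcomp f (vcomp u g)) = vcomp f (vcomp u g).
  by rewrite -!vcompA (vcompA g) (vcompA u) u1 vcomp1l.
case: (local_end_idem hY he) => [e0|e1].
  have : vcomp g (vcomp (vcomp f (vcomp u g)) f) = 0 by rewrite e0 vcomp0l vcomp0r.
  rewrite -!vcompA u1 vcomp1r => h.
  by apply: (not_invertible0 (local_end_neq0 hl) (Y := H)); rewrite -h; exists u.
by apply: hni; exists f, (vcomp u g); rewrite -vcompA u1.
Qed.

Lemma topdim_gt0_summand (H' H X : Mor i j) : local_end H' -> iso H' H -> summand H X ->
  (0 < topdim H' X)%N.
Proof.
move=> hl [al [be [hba hab]]] [Z [p1 [p2 [e1 [e2 [h1 _ _ _ _]]]]]].
apply/topdim_gt0 => //; exists (vcomp e1 al), (vcomp be p1).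
by rewrite -vcompA (vcompA p1) h1 vcomp1l hba; apply: invertible_id2.
Qed.

End Radical.

Section KrullSchmidt.
Variables (i j : Ob C).

Lemma local_end_iso (X Y : Mor i j) : iso X Y -> local_end Y -> local_end X.
Proof.
move=> [f [g [h1 h2]]] [nz hl]; split.
  by move=> e; apply: nz; rewrite -h2 -[g]vcomp1l e vcomp0l vcomp0r.
have transport (h : Hom X X) : invertible (vcomp f (vcomp h g)) -> invertible h.
  move=> [w [w1 w2]]; exists (vcomp g (vcomp w f)); split.
    have -> : vcomp (vcomp g (vcomp w f)) h = vcomp g (vcomp (vcomp w (vcomp f (vcomp h g))) f).
      by rewrite -!vcompA h1 vcomp1r.
    by rewrite w1 vcomp1l h1.
  have -> : vcomp h (vcomp g (vcomp w f)) = vcomp g (vcomp (vcomp (vcomp f (vcomp h g)) w) f).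
    by rewrite -!vcompA (vcompA g f) h1 vcomp1l.
  by rewrite w2 vcomp1l h1.
move=> h; have [/transport|] := hl (vcomp f (vcomp h g)); first by left.
by move=> hi; right; apply: transport; rewrite vcompBl vcompBr vcomp1l h2.
Qed.

(* A complement of [H] is obtained by splitting the idempotent [id2 X - E P]. *)
Lemma idem_split_summand (H X : Mor i j) (E : Hom H X) (P : Hom X H) :
  idem_split i j -> vcomp P E = id2 H -> summand H X.
Proof.
move=> his hPE; set e := id2 X - vcomp E P.
have he : vcomp e e = e.
  by rewrite vcompBl !vcompBr !vcomp1l vcomp1r -vcompA (vcompA P) hPE vcomp1l subrr subr0.
have [Z [r [s [hsr hrs]]]] := his X e he.
have Ps : vcomp P s = 0.
  rewrite -[s]vcomp1r -hrs (vcompA s r s) hsr (vcompA P) vcompBr vcomp1r.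
  by rewrite (vcompA P E P) hPE vcomp1l subrr vcomp0l.
have rE : vcomp r E = 0.
  rewrite -[r]vcomp1l -hrs -(vcompA r s r) hsr -(vcompA r) vcompBl vcomp1l.
  by rewrite -(vcompA E P E) hPE vcomp1r subrr vcomp0r.
exists Z, P, r, E, s; split => //.
by rewrite hsr addrC subrK.
Qed.

Lemma summand_topdim_gt0 (H X : Mor i j) : idem_split i j -> local_end H ->
  (0 < topdim H X)%N -> summand H X.
Proof.
move=> his hl /(topdim_gt0 _ hl) [f [g [w [w1 _]]]].
by apply: (idem_split_summand (E := f) (P := vcomp w g)) => //; rewrite -vcompA.
Qed.

Lemma biprod_isZero_iso (X Y Z : Mor i j) : biprod X Y Z -> isZero Z -> iso X Y.
Proof.
move=> [p1 [p2 [e1 [e2 [h1 _ _ _ h5]]]]] hz.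
have e20 : e2 = 0 by rewrite -[e2]vcomp1r hz vcomp0r.
by exists p1, e1; rewrite -h5 e20 vcomp0l addr0.
Qed.

Lemma local_end_indecomposable (Y : Mor i j) : local_end Y -> indecomposable Y.
Proof.
move=> hl; split; first exact: local_end_neq0 hl.
move=> A B [p1 [p2 [e1 [e2 [h1 h2 h3 _ _]]]]].
have he : vcomp (vcomp e1 p1) (vcomp e1 p1) = vcomp e1 p1.
  by rewrite -vcompA (vcompA p1) h1 vcomp1l.
case: (local_end_idem hl he) => e0.
  left; rewrite /isZero -h1 -[vcomp p1 e1]vcomp1r -h1 -(vcompA p1 e1).
  by rewrite (vcompA e1 p1 e1) e0 vcomp0l vcomp0r.
right; rewrite /isZero -h2.
have -> : e2 = 0 by rewrite -[e2]vcomp1l -e0 -vcompA h3 vcomp0r.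
by rewrite vcomp0r.
Qed.

Lemma indecomposable_local_end (X : Mor i j) : idem_split i j -> krull_schmidt i j ->
  indecomposable X -> local_end X.
Proof.
move=> his [_ hks] [nz hind].
have [[|n] [Y [e [p [hl h1 _ h3]]]]] := hks X.
  by case: nz; rewrite /isZero -h3 big_ord0.
have [Z hb] := idem_split_summand his (h1 ord0).
case: (hind _ _ hb) => hz; first by case: (local_end_neq0 (hl ord0)).
exact: local_end_iso (biprod_isZero_iso hb hz) (hl ord0).
Qed.

End KrullSchmidt.

Section HorizontalComposition.
Variables (i j l : Ob C).

Definition hcompl (F F' : Mor j l) (G G' : Mor i j) (a : Hom F F') :
    {linear Hom G G' -> Hom (comp1 F G) (comp1 F' G')} :=
  HB.pack (fun b => hcomp a b)
    (GRing.isLinear.Build _ _ _ _ (fun b => hcomp a b) (fun x b b' => hlin_r HC x a b b')).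

Definition hcompr (F F' : Mor j l) (G G' : Mor i j) (b : Hom G G') :
    {linear Hom F F' -> Hom (comp1 F G) (comp1 F' G')} :=
  HB.pack (fun a => hcomp a b)
    (GRing.isLinear.Build _ _ _ _ (fun a => hcomp a b) (fun x a a' => hlin_l HC x a a' b)).

Section HcompLinear.
Variables (F F' : Mor j l) (G G' : Mor i j).

Lemma hcomp0r (a : Hom F F') : hcomp a (0 : Hom G G') = 0.
Proof. exact: (linear0 (hcompl G G' a)). Qed.
Lemma hcomp0l (b : Hom G G') : hcomp (0 : Hom F F') b = 0.
Proof. exact: (linear0 (hcompr F F' b)). Qed.
Lemma hcomp_sumr (I : finType) (a : Hom F F') (b : I -> Hom G G') :
  hcomp a (\sum_t b t) = \sum_t hcomp a (b t).
Proof. exact: (linear_sum (hcompl G G' a)). Qed.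
Lemma hcomp_suml (I : finType) (a : I -> Hom F F') (b : Hom G G') :
  hcomp (\sum_t a t) b = \sum_t hcomp (a t) b.
Proof. exact: (linear_sum (hcompr F F' b)). Qed.

End HcompLinear.

Lemma decomp_comp1l (F : Mor j l) (X : Mor i j) n (Z : 'I_n -> Mor i j)
    (E : forall a, Hom (Z a) X) (P : forall a, Hom X (Z a)) :
  decomp E P -> decomp (fun a => hcomp (id2 F) (E a)) (fun a => hcomp (id2 F) (P a)).
Proof.
move=> [h1 h2 h3]; split.
- by move=> a; rewrite -(interchange HC) vcomp1l h1 (hid HC).
- by move=> a b ab; rewrite -(interchange HC) vcomp1l h2 // hcomp0r.
rewrite (eq_bigr (fun a => hcomp (id2 F) (vcomp (E a) (P a)))).
  by rewrite -hcomp_sumr h3 (hid HC).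
by move=> a _; rewrite -(interchange HC) vcomp1l.
Qed.

Lemma decomp_comp1r (G : Mor i j) (X : Mor j l) n (Z : 'I_n -> Mor j l)
    (E : forall a, Hom (Z a) X) (P : forall a, Hom X (Z a)) :
  decomp E P -> decomp (fun a => hcomp (E a) (id2 G)) (fun a => hcomp (P a) (id2 G)).
Proof.
move=> [h1 h2 h3]; split.
- by move=> a; rewrite -(interchange HC) vcomp1l h1 (hid HC).
- by move=> a b ab; rewrite -(interchange HC) vcomp1l h2 // hcomp0l.
rewrite (eq_bigr (fun a => hcomp (vcomp (E a) (P a)) (id2 G))).
  by rewrite -hcomp_suml h3 (hid HC).
by move=> a _; rewrite -(interchange HC) vcomp1l.
Qed.

Lemma topdim_comp1_iso (H : Mor i l) (F F' : Mor j l) (G G' : Mor i j) :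
  local_end H -> iso F F' -> iso G G' -> topdim H (comp1 F G) = topdim H (comp1 F' G').
Proof.
move=> hl [f [g [h1 h2]]] [f' [g' [h1' h2']]].
rewrite (topdim_decomp hl (decomp_comp1r G (decomp_iso h1 h2))) big_ord1.
by rewrite (topdim_decomp hl (decomp_comp1l F' (decomp_iso h1' h2'))) big_ord1.
Qed.

End HorizontalComposition.

Section PackedMorphisms.

Definition ends (x : mor1 C) : Ob C * Ob C := (msrc x, mtgt x).

Definition castMor (i j i' j' : Ob C) (e1 : i = i') (e2 : j = j') (X : Mor i j) : Mor i' j' :=
  match e1 in _ = a, e2 in _ = b return Mor a b with erefl, erefl => X end.

Definition topdimx (h x : mor1 C) : nat :=
  match msrc x =P msrc h, mtgt x =P mtgt h with
  | ReflectT e1, ReflectT e2 => topdim (mor h) (castMor e1 e2 (mor x))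
  | _, _ => 0%N
  end.

Lemma topdimxE (i j : Ob C) (H X : Mor i j) : topdimx (Mor1 H) (Mor1 X) = topdim H X.
Proof.
rewrite /topdimx /=; case: eqP => [e1|//]; case: eqP => [e2|//].
by rewrite (eq_irrelevance e1 erefl) (eq_irrelevance e2 erefl).
Qed.

Lemma topdimx_eq0 (h x : mor1 C) : ends x != ends h -> topdimx h x = 0%N.
Proof.
rewrite /topdimx /ends; case: eqP => [e1|//]; case: eqP => [e2|//].
by rewrite {1}e1 {1}e2 eqxx.
Qed.

Lemma topdimx_ends (h x : mor1 C) : topdimx h x != 0%N -> ends x = ends h.
Proof. by apply: contraNeq => /topdimx_eq0 ->. Qed.

(* Junk value [y] when [x] and [y] are not composable. *)
Definition compx (x y : mor1 C) : mor1 C :=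
  match mtgt y =P msrc x with
  | ReflectT e => Mor1 (comp1 (mor x) (castMor (erefl _) e (mor y)))
  | ReflectF _ => y
  end.

Lemma compxE (i j l : Ob C) (F : Mor j l) (G : Mor i j) :
  compx (Mor1 F) (Mor1 G) = Mor1 (comp1 F G).
Proof. by rewrite /compx /=; case: eqP => [e|//]; rewrite (eq_irrelevance e erefl). Qed.

Lemma msrc_compx (x y : mor1 C) : mtgt y = msrc x -> msrc (compx x y) = msrc y.
Proof. by case: x => j l F; case: y => i j' G /= e; subst j'; rewrite compxE. Qed.

Lemma mtgt_compx (x y : mor1 C) : mtgt y = msrc x -> mtgt (compx x y) = mtgt x.
Proof. by case: x => j l F; case: y => i j' G /= e; subst j'; rewrite compxE. Qed.

Lemma compxA (x y z : mor1 C) : mtgt z = msrc y -> mtgt y = msrc x ->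
  compx x (compx y z) = compx (compx x y) z.
Proof.
case: x => jx lx F; case: y => iy jy G; case: z => iz jz Z /= e1 e2; subst.
by rewrite !compxE (c1A HC).
Qed.

Lemma Mor1_inj (i j : Ob C) (F G : Mor i j) : Mor1 F = Mor1 G -> F = G.
Proof.
move=> e; pose sig x := existT (fun p : Ob C * Ob C => Mor p.1 p.2) (ends x) (mor x).
exact: inj_pair2_eq_dec _ (@eq_comparable _) _ _ _ _ (congr1 sig e).
Qed.

Lemma isoP_Mor1 (i j : Ob C) (F : Mor i j) (y : mor1 C) :
  isoP (Mor1 F) y -> exists G : Mor i j, y = Mor1 G /\ iso F G.
Proof.
move=> [i' [j' [F0 [G0 [e1 e2 h]]]]].
move: (congr1 ends e1) => [ei ej]; subst i' j'.
by rewrite -(Mor1_inj e1) in h; exists G0.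
Qed.

End PackedMorphisms.

Section Deformation.
Hypotheses (HKS : forall i j : Ob C, krull_schmidt i j) (HIS : forall i j : Ob C, idem_split i j).
Variables (S : finType) (cls : mor1 C -> S) (HS : iso_classes cls).
Variables (rho : S -> mor1 C) (rhoK : forall s, indecP (rho s) /\ cls (rho s) = s).

Lemma indecomposable_local (i j : Ob C) (X : Mor i j) : indecomposable X -> local_end X.
Proof. exact: indecomposable_local_end. Qed.

Lemma ks_decomp (i j : Ob C) (X : Mor i j) :
  exists n (Y : 'I_n -> Mor i j) (E : forall a, Hom (Y a) X) (P : forall a, Hom X (Y a)),
    (forall a, local_end (Y a)) /\ decomp E P.
Proof. by have [_ /(_ X) [n [Y [E [P [hY h1 h2 h3]]]]]] := HKS i j; exists n, Y, E, P. Qed.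

Lemma rho_local w (i j : Ob C) (R : Mor i j) : rho w = Mor1 R -> local_end R.
Proof. by move=> e; have [+ _] := rhoK w; rewrite e => /indecomposable_local. Qed.

Lemma cls_eq_iso (i j : Ob C) (Y G : Mor i j) : local_end Y -> local_end G ->
  cls (Mor1 Y) = cls (Mor1 G) <-> iso Y G.
Proof.
move=> hY hG; rewrite (proj2 HS (Mor1 Y) (Mor1 G)); try exact: local_end_indecomposable.
by split=> [/isoP_Mor1 [G' [/Mor1_inj <-]]|hi] //; exists i, j, Y, G.
Qed.

Lemma rho_cls (i j : Ob C) (Y : Mor i j) : local_end Y ->
  exists G : Mor i j, rho (cls (Mor1 Y)) = Mor1 G /\ iso Y G.
Proof.
move=> hY; have [hr1 hr2] := rhoK (cls (Mor1 Y)); apply: isoP_Mor1.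
by apply/(proj2 HS (Mor1 Y) _ (local_end_indecomposable hY) hr1); rewrite hr2.
Qed.

Definition tdim (w : S) : nat := topdimx (rho w) (rho w).

Definition mult (w : S) (x : mor1 C) : nat := topdimx (rho w) x %/ tdim w.

Lemma tdim_gt0 w : (0 < tdim w)%N.
Proof.
rewrite /tdim; case E: (rho w) => [i j R].
by rewrite topdimxE; apply/topdim_id_gt0/(rho_local E).
Qed.

Lemma topdimx_count (i j : Ob C) (X : Mor i j) n (Y : 'I_n -> Mor i j)
    (E : forall a, Hom (Y a) X) (P : forall a, Hom X (Y a)) :
  (forall a, local_end (Y a)) -> decomp E P ->
  forall w, topdimx (rho w) (Mor1 X) = ((\sum_a (cls (Mor1 (Y a)) == w)) * tdim w)%N.
Proof.
move=> hY dX w; rewrite /tdim; case Ew: (rho w) => [i0 j0 R]; rewrite topdimxE.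
have hR := rho_local Ew.
have [e|ne] := eqVneq (i0, j0) (i, j); last first.
  rewrite topdimx_eq0 1?eq_sym // big1 // => a _; case: eqP => // ew.
  have [G [eG _]] := rho_cls (hY a); rewrite ew Ew in eG.
  by move: (congr1 ends eG); rewrite /ends /= => e; rewrite e eqxx in ne.
case: e => ei ej; subst i0 j0; rewrite topdimxE (topdim_decomp hR dX) big_distrl /=.
apply: eq_bigr => a _; have [ew|nw] := eqVneq (cls (Mor1 (Y a))) w.
  have [G [eG iG]] := rho_cls (hY a); rewrite ew Ew in eG.
  by rewrite -(Mor1_inj eG) in iG; rewrite mul1n; apply: topdim_iso hR iG.
rewrite mul0n; apply: (topdim_noniso hR (hY a)) => hi; case/eqP: nw.
by rewrite -(proj2 (rhoK w)) Ew; apply/(cls_eq_iso (hY a) hR)/iso_sym.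
Qed.

Lemma topdimx_mult w x : topdimx (rho w) x = (mult w x * tdim w)%N.
Proof.
rewrite /mult divnK //; case: x => i j X; have [n [Y [E [P [hY dX]]]]] := ks_decomp X.
by rewrite (topdimx_count hY dX) dvdn_mull.
Qed.

Lemma mult_eq0 w x : (mult w x == 0%N) = (topdimx (rho w) x == 0%N).
Proof. by rewrite topdimx_mult muln_eq0 [tdim w == 0%N]eqn0Ngt tdim_gt0 orbF. Qed.

Lemma mult_ends w x : mult w x != 0%N -> ends x = ends (rho w).
Proof. by rewrite mult_eq0; apply: topdimx_ends. Qed.

Lemma additive_by_mult (i j : Ob C) (f : Mor i j -> nat) (T : S -> nat) :
  (forall (X : Mor i j) n (Z : 'I_n -> Mor i j)
      (E : forall a, Hom (Z a) X) (P : forall a, Hom X (Z a)),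
    decomp E P -> f X = (\sum_a f (Z a))%N) ->
  (forall w (Y G : Mor i j), rho w = Mor1 G -> iso Y G -> f Y = T w) ->
  forall X : Mor i j, f X = (\sum_w mult w (Mor1 X) * T w)%N.
Proof.
move=> hdec hiso X; have [n [Y [E [P [hY dX]]]]] := ks_decomp X.
rewrite (hdec _ _ _ _ _ dX) (eq_bigr (fun a => T (cls (Mor1 (Y a))))); last first.
  by move=> a _; have [G [eG iG]] := rho_cls (hY a); apply: hiso eG iG.
rewrite (eq_bigr (fun w => \sum_a (cls (Mor1 (Y a)) == w) * T w)%N); last first.
  by move=> w _; rewrite /mult (topdimx_count hY dX) mulnK ?tdim_gt0 // big_distrl.
rewrite exchange_big /=; apply: eq_bigr => a _.
rewrite (bigD1 (cls (Mor1 (Y a)))) //= eqxx mul1n big1 ?addn0 // => w /negPf.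
by rewrite eq_sym => ->.
Qed.

Lemma topdimx_compl (x y : mor1 C) (u : S) : mtgt y = msrc x ->
  topdimx (rho u) (compx x y) = (\sum_w mult w y * topdimx (rho u) (compx x (rho w)))%N.
Proof.
case: x => j l F; case: y => i j' G /= e; subst j'; rewrite compxE.
case Eu: (rho u) => [iu lu H]; have hH := rho_local Eu.
have [e|ne] := eqVneq (iu, lu) (i, l).
  case: e => ei el; subst iu lu; rewrite topdimxE.
  apply: (additive_by_mult (f := fun X => topdim H (comp1 F X))).
    by move=> X n Z E P dX; apply: topdim_decomp hH (decomp_comp1l F dX).
  move=> w Y G' Ew iY; rewrite Ew compxE topdimxE.
  exact: topdim_comp1_iso hH (iso_refl F) iY.
rewrite topdimx_eq0 1?eq_sym //; apply/esym/big1 => w _.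
have [->|] := eqVneq (mult w (Mor1 G)) 0%N; first by rewrite mul0n.
move=> /mult_ends; rewrite /ends /= => -[ei ej].
by rewrite topdimx_eq0 ?muln0 // /ends msrc_compx // mtgt_compx //= -ei eq_sym.
Qed.

Lemma topdimx_compr (x y : mor1 C) (u : S) : mtgt y = msrc x ->
  topdimx (rho u) (compx x y) = (\sum_w mult w x * topdimx (rho u) (compx (rho w) y))%N.
Proof.
case: x => j l F; case: y => i j' G /= e; subst j'; rewrite compxE.
case Eu: (rho u) => [iu lu H]; have hH := rho_local Eu.
have [e|ne] := eqVneq (iu, lu) (i, l).
  case: e => ei el; subst iu lu; rewrite topdimxE.
  apply: (additive_by_mult (f := fun X => topdim H (comp1 X G))).
    by move=> X n Z E P dX; apply: topdim_decomp hH (decomp_comp1r G dX).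
  move=> w Y F' Ew iY; rewrite Ew compxE topdimxE.
  exact: topdim_comp1_iso hH iY (iso_refl G).
rewrite topdimx_eq0 1?eq_sym //; apply/esym/big1 => w _.
have [->|] := eqVneq (mult w (Mor1 F)) 0%N; first by rewrite mul0n.
move=> /mult_ends; rewrite /ends /= => -[ej el].
by rewrite topdimx_eq0 ?muln0 // /ends msrc_compx // mtgt_compx //= -el eq_sym.
Qed.

Lemma mult_compl (x y : mor1 C) (u : S) : mtgt y = msrc x ->
  mult u (compx x y) = (\sum_w mult w y * mult u (compx x (rho w)))%N.
Proof.
move=> e; apply/eqP; rewrite -(eqn_pmul2r (tdim_gt0 u)) -topdimx_mult topdimx_compl //.
by rewrite big_distrl; apply/eqP/eq_bigr => w _; rewrite topdimx_mult mulnA.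
Qed.

Lemma mult_compr (x y : mor1 C) (u : S) : mtgt y = msrc x ->
  mult u (compx x y) = (\sum_w mult w x * mult u (compx (rho w) y))%N.
Proof.
move=> e; apply/eqP; rewrite -(eqn_pmul2r (tdim_gt0 u)) -topdimx_mult topdimx_compr //.
by rewrite big_distrl; apply/eqP/eq_bigr => w _; rewrite topdimx_mult mulnA.
Qed.

Lemma mult_compx_ends (x y : mor1 C) w : mtgt y = msrc x -> mult w (compx x y) != 0%N ->
  msrc (rho w) = msrc y /\ mtgt (rho w) = mtgt x.
Proof. by move=> e /mult_ends; rewrite /ends msrc_compx // mtgt_compx // => -[<- <-]. Qed.

Definition mu (s t u : S) : nat :=
  if mtgt (rho t) == msrc (rho s) then mult u (compx (rho s) (rho t)) else 0%N.

Lemma mu_assoc r s t u : (\sum_i mu s t i * mu r i u = \sum_j mu r s j * mu j t u)%N.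
Proof.
rewrite /mu; have [ets|nts] := eqVneq (mtgt (rho t)) (msrc (rho s));
  have [esr|nsr] := eqVneq (mtgt (rho s)) (msrc (rho r)).
- rewrite (eq_bigr (fun i =>
      mult i (compx (rho s) (rho t)) * mult u (compx (rho r) (rho i))))%N; last first.
    move=> i _; case: eqP => // ne.
    have [->|/(mult_compx_ends ets) [_ e]] := eqVneq (mult i (compx (rho s) (rho t))) 0%N.
      by rewrite mul0n.
    by case: ne; rewrite e.
  rewrite [RHS](eq_bigr (fun j =>
      mult j (compx (rho r) (rho s)) * mult u (compx (rho j) (rho t))))%N; last first.
    move=> j _; case: eqP => // ne.
    have [->|/(mult_compx_ends esr) [e _]] := eqVneq (mult j (compx (rho r) (rho s))) 0%N.
      by rewrite mul0n.
    by case: ne; rewrite e.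
  by rewrite -mult_compl ?mtgt_compx // -mult_compr ?msrc_compx // compxA.
- rewrite [RHS]big1 => [|j _]; last by rewrite mul0n.
  apply: big1 => i _; case: eqP => [eir|]; last by rewrite muln0.
  have [->|/(mult_compx_ends ets) [_ e]] := eqVneq (mult i (compx (rho s) (rho t))) 0%N.
    by rewrite mul0n.
  by move: nsr; rewrite -e eir eqxx.
- rewrite big1 => [|i _]; last by rewrite mul0n.
  apply/esym/big1 => j _; case: eqP => [etj|]; last by rewrite muln0.
  have [->|/(mult_compx_ends esr) [e _]] := eqVneq (mult j (compx (rho r) (rho s))) 0%N.
    by rewrite mul0n.
  by move: nts; rewrite -e etj eqxx.
- by rewrite !big1 // => ? _; rewrite mul0n.
Qed.

Lemma msg_star_mu s t u : msg_star cls s t u <-> mu s t u <> 0%N.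
Proof.
split.
  move=> [x [y [z [ix iy iz [<- <- <- [i [j [l [F [G [H [ex ey ez hsum]]]]]]]]]]]].
  subst x y z.
  have [F' [eF iF]] := rho_cls (indecomposable_local ix).
  have [G' [eG iG]] := rho_cls (indecomposable_local iy).
  have [H' [eH iH]] := rho_cls (indecomposable_local iz).
  rewrite /mu eF eG /= eqxx compxE; apply/eqP; rewrite mult_eq0 eH topdimxE -lt0n.
  rewrite -(topdim_comp1_iso (rho_local eH) iF iG).
  exact: topdim_gt0_summand (rho_local eH) (iso_sym iH) hsum.
rewrite /mu; case: eqP => // + /eqP; rewrite mult_eq0.
move: (rhoK s) (rhoK t) (rhoK u).
case: (rho s) => [j l F] [iF <-]; case: (rho t) => [i j' G] [iG <-].
case: (rho u) => [i' l' H] [iH <-] /= e; subst j'; rewrite compxE => nz.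
move: (topdimx_ends nz); rewrite /ends /= => -[ei el]; subst i' l'.
rewrite topdimxE -lt0n in nz.
have hsum := summand_topdim_gt0 (@HIS i l) (indecomposable_local iH) nz.
by exists (Mor1 F), (Mor1 G), (Mor1 H); split => //; split => //; exists i, j, l, F, G, H.
Qed.

End Deformation.
End TwoCategory.

Theorem proposition14 (k : fieldType) (C : cat2 k) (HC : finitary C)
  (S : finType) (cls : mor1 C -> S) (HS : iso_classes cls) :
  exists mu : S -> S -> S -> nat, deformation (msg_star cls) mu.
Proof.
have [Hstrict hom _ _] := HC.
have HKS (i j : Ob C) : krull_schmidt i j by case: (hom i j).
have HIS (i j : Ob C) : idem_split i j by case: (hom i j).
have /ClassicalEpsilon.choice [rho rhoK] := proj1 HS.
exists (mu rho); split => [r s t u|s t u].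
  exact: (mu_assoc Hstrict HKS HIS HS rhoK).
exact: (msg_star_mu Hstrict HKS HIS HS rhoK).
Qed.
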